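(* For every $M_q=\begin{pmatrix}\mathcal{R}(q) & \mathcal{V}(q)\\ \mathcal{S}(q) & \mathcal{U}(q)\end{pmatrix}\in G_q$, the polynomial $q^2-q+1$ divides $\mathcal{V}(q)\,q^4+(\mathcal{U}(q)-\mathcal{R}(q))\,q^2-\mathcal{S}(q)$ in $\mathbb{Z}[q,q^{-1}]$.
   Context: Let $q$ be a formal parameter and let $R_q=\begin{pmatrix} q & 1\\ 0 & 1\end{pmatrix}$, $S_q=\begin{pmatrix} 0 & -q^{-1}\\ 1 & 0\end{pmatrix}\in \mathrm{GL}(2,\mathbb{Z}[q,q^{-1}])$. Let $G_q=\langle R_q,S_q\rangle$ be the group they generate. *)

(* Z[q,q^{-1}] is realized as the subring of Laurent
   polynomials inside the fraction field of Z[q]. *)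
From HB Require Import structures.
From mathcomp Require Import all_boot all_order all_algebra fraction.
Set Implicit Arguments. Unset Strict Implicit. Unset Printing Implicit Defensive.
Import Order.TTheory GRing.Theory Num.Theory.
Local Open Scope ring_scope.

Definition F := {fraction {poly int}}.

Definition toF (p : {poly int}) : F := @FracField.tofrac _ p.

Definition qF : F := toF 'X.

Definition laurent (f : F) : Prop :=
  exists (p : {poly int}) (n : nat), f = toF p / qF ^+ n.

Definition mx2 (a b c d : F) : 'M[F]_2 :=
  \matrix_(i < 2, j < 2)
    if i == 0 then (if j == 0 then a else b) else (if j == 0 then c else d).

Definition Rq : 'M[F]_2 := mx2 qF 1 0 1.
Definition Sq : 'M[F]_2 := mx2 0 (- qF^-1) 1 0.

Inductive in_Gq : 'M[F]_2 -> Prop :=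
  | Gq_one : in_Gq 1%:M
  | Gq_R M : in_Gq M -> in_Gq (M *m Rq)
  | Gq_Rinv M : in_Gq M -> in_Gq (M *m invmx Rq)
  | Gq_S M : in_Gq M -> in_Gq (M *m Sq)
  | Gq_Sinv M : in_Gq M -> in_Gq (M *m invmx Sq).

Definition laurent_dvd (a b : F) : Prop :=
  exists c : F, laurent c /\ b = a * c.

From HB Require Import structures.
From mathcomp Require Import all_boot all_order all_algebra fraction.
From mathcomp Require Import ring.
Import Order.TTheory GRing.Theory Num.Theory.
Local Open Scope ring_scope.

(* Modulo q^2 - q + 1 one has q^3 = -1, and the row u = (q^2, 1) is a left
   eigenvector of R_q, R_q^-1, S_q and S_q^-1, with eigenvalues q, -q^2, -q and
   q^2.  Hence u M = c u modulo q^2 - q + 1 for every M in G_q.  Pairing with the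
   column v = (-1, q^2), for which u v = 0, gives u M v = 0 modulo q^2 - q + 1,
   and u M v = V q^4 + (U - R) q^2 - S. *)

Lemma qF_neq0 : qF != 0.
Proof. by rewrite /qF /toF tofrac_eq0 polyX_eq0. Qed.

Lemma laurent_toF p : laurent (toF p).
Proof. by exists p, 0%N; rewrite expr0 divr1. Qed.

Lemma laurent0 : laurent 0.
Proof. by have := laurent_toF 0; rewrite /toF tofrac0. Qed.

Lemma laurent1 : laurent 1.
Proof. by have := laurent_toF 1; rewrite /toF tofrac1. Qed.

Lemma laurentq : laurent qF.
Proof. exact: laurent_toF. Qed.

Lemma laurentqV : laurent qF^-1.
Proof. by exists 1, 1%N; rewrite /toF tofrac1 expr1 div1r. Qed.

Lemma laurentN f : laurent f -> laurent (- f).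
Proof. by move=> [p [n ->]]; exists (- p), n; rewrite /toF tofracN mulNr. Qed.

Lemma add_divXn (K : fieldType) (x a b : K) n m : x != 0 ->
  a / x ^+ n + b / x ^+ m = (a * x ^+ m + b * x ^+ n) / x ^+ (n + m).
Proof. by move=> x0; rewrite exprD; field; rewrite !expf_neq0. Qed.

Lemma mul_divXn (K : fieldType) (x a b : K) n m : x != 0 ->
  (a / x ^+ n) * (b / x ^+ m) = (a * b) / x ^+ (n + m).
Proof. by move=> x0; rewrite exprD; field; rewrite !expf_neq0. Qed.

Lemma laurentD f g : laurent f -> laurent g -> laurent (f + g).
Proof.
move=> [p [n ->]] [r [m ->]]; exists (p * 'X ^+ m + r * 'X ^+ n), (n + m)%N.
by rewrite add_divXn ?qF_neq0 // /toF tofracD !tofracM !tofracXn.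
Qed.

Lemma laurentM f g : laurent f -> laurent g -> laurent (f * g).
Proof.
move=> [p [n ->]] [r [m ->]]; exists (p * r), (n + m)%N.
by rewrite mul_divXn ?qF_neq0 // /toF tofracM.
Qed.

Lemma laurent_sum (I : Type) (r : seq I) (P : pred I) (f : I -> F) :
  (forall i, P i -> laurent (f i)) -> laurent (\sum_(i <- r | P i) f i).
Proof. exact: (big_ind laurent laurent0 laurentD). Qed.

Ltac laurent_tac := repeat first
  [ assumption | exact: laurent0 | exact: laurent1 | exact: laurentq
  | exact: laurentqV | apply: laurentN | apply: laurentD | apply: laurentM ].

Definition laurent_mx {m n} (A : 'M[F]_(m, n)) : Prop := forall i j, laurent (A i j).

Lemma laurent_mx0 m n : laurent_mx (0%R : 'M[F]_(m, n)).
Proof. by move=> i j; rewrite mxE; exact: laurent0. Qed.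

Lemma laurent_mxD m n (A B : 'M[F]_(m, n)) :
  laurent_mx A -> laurent_mx B -> laurent_mx (A + B).
Proof. by move=> LA LB i j; rewrite mxE; apply: laurentD. Qed.

Lemma laurent_mxZ m n c (A : 'M[F]_(m, n)) :
  laurent c -> laurent_mx A -> laurent_mx (c *: A).
Proof. by move=> Lc LA i j; rewrite mxE; apply: laurentM. Qed.

Lemma laurent_mxM m n p (A : 'M[F]_(m, n)) (B : 'M[F]_(n, p)) :
  laurent_mx A -> laurent_mx B -> laurent_mx (A *m B).
Proof.
by move=> LA LB i j; rewrite mxE; apply: laurent_sum => k _; apply: laurentM.
Qed.

Definition left_eigen_mod (p : F) {n} (u : 'rV[F]_n) (A : 'M[F]_n) : Prop :=
  exists c w, [/\ laurent c, laurent_mx w & u *m A = c *: u + p *: w].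

Lemma left_eigen_mod1 p n (u : 'rV[F]_n) : left_eigen_mod p u 1%:M.
Proof.
exists 1, 0; split; [exact: laurent1 | exact: laurent_mx0 |].
by rewrite mulmx1 scale1r scaler0 addr0.
Qed.

Lemma left_eigen_modM p n (u : 'rV[F]_n) A B : left_eigen_mod p u A ->
  laurent_mx B -> left_eigen_mod p u B -> left_eigen_mod p u (A *m B).
Proof.
move=> [a [w [La Lw uA]]] LB [b [w' [Lb Lw' uB]]].
exists (a * b), (a *: w' + w *m B); split.
- exact: laurentM.
- by apply: laurent_mxD; [apply: laurent_mxZ | apply: laurent_mxM].
rewrite mulmxA uA mulmxDl -!scalemxAl uB.
by rewrite !scalerDr !scalerA addrA [a * p]mulrC.
Qed.

Definition rv2 (a b : F) : 'rV[F]_2 := \row_(j < 2) if j == 0 then a else b.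

Lemma mx2E a b c d : (mx2 a b c d 0 0 = a) * (mx2 a b c d 0 1 = b)
  * (mx2 a b c d 1 0 = c) * (mx2 a b c d 1 1 = d).
Proof. by rewrite /mx2 !mxE. Qed.

Lemma rv2_eta (w : 'rV[F]_2) : w = rv2 (w 0 0) (w 0 1).
Proof.
apply/matrixP=> i j; rewrite !ord1 mxE.
by case: j => [[|[|//]] ?] /=; congr (w _ _); apply: val_inj.
Qed.

Lemma rv2_inj a b a' b' : rv2 a b = rv2 a' b' -> a = a' /\ b = b'.
Proof.
move=> E; have := congr1 (fun w : 'rV[F]_2 => w 0 0) E.
by have := congr1 (fun w : 'rV[F]_2 => w 0 1) E; rewrite !mxE.
Qed.

Lemma add_rv2 a b a' b' : rv2 a b + rv2 a' b' = rv2 (a + a') (b + b').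
Proof. by apply/matrixP=> i j; rewrite !mxE; case: ifP. Qed.

Lemma scale_rv2 c a b : c *: rv2 a b = rv2 (c * a) (c * b).
Proof. by apply/matrixP=> i j; rewrite !mxE; case: ifP. Qed.

Lemma mul_rv2 a b (A : 'M[F]_2) :
  rv2 a b *m A = rv2 (a * A 0 0 + b * A 1 0) (a * A 0 1 + b * A 1 1).
Proof.
apply/matrixP=> i j; rewrite !mxE !big_ord_recr big_ord0 /= add0r !mxE /=.
by case: j => [[|[|//]] ?] /=; congr (_ * A _ _ + _ * A _ _); apply: val_inj.
Qed.

Lemma mul_mx2 a b c d a' b' c' d' :
  mx2 a b c d *m mx2 a' b' c' d' =
  mx2 (a * a' + b * c') (a * b' + b * d') (c * a' + d * c') (c * b' + d * d').
Proof.
apply/matrixP=> i j; rewrite !mxE !big_ord_recr big_ord0 /= add0r !mxE /=.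
by case: i => [[|[|//]] ?]; case: j => [[|[|//]] ?].
Qed.

Lemma mx2_1 : 1%:M = mx2 1 0 0 1.
Proof.
by apply/matrixP=> i j; rewrite !mxE; case: i => [[|[|//]] ?]; case: j => [[|[|//]] ?].
Qed.

Lemma laurent_mx2 a b c d : laurent a -> laurent b -> laurent c -> laurent d ->
  laurent_mx (mx2 a b c d).
Proof. by move=> La Lb Lc Ld i j; rewrite mxE; do 2!case: ifP. Qed.

Lemma left_eigen_mod_rv2P p a b (A : 'M[F]_2) :
  left_eigen_mod p (rv2 a b) A <->
  exists c x y, [/\ laurent c, laurent x, laurent y,
    a * A 0 0 + b * A 1 0 = c * a + p * x &
    a * A 0 1 + b * A 1 1 = c * b + p * y].
Proof.
split=> [[c [w [Lc Lw]]] | [c [x [y [Lc Lx Ly E0 E1]]]]].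
- rewrite mul_rv2 [w]rv2_eta !scale_rv2 add_rv2 => /rv2_inj[E0 E1].
  by exists c, (w 0 0), (w 0 1).
- exists c, (rv2 x y); split=> //; first by move=> i j; rewrite mxE; case: ifP.
  by rewrite mul_rv2 !scale_rv2 add_rv2 E0 E1.
Qed.

Lemma invmx_eq (R : comUnitRingType) n (A B : 'M[R]_n) :
  A *m B = 1%:M -> invmx A = B.
Proof.
by move=> AB; have [uA _] := mulmx1_unit AB; rewrite -(mulKmx uA B) AB mulmx1.
Qed.

Lemma invmx_Rq : invmx Rq = mx2 qF^-1 (- qF^-1) 0 1.
Proof.
apply: invmx_eq; rewrite mul_mx2 mx2_1 mulrN mulfV ?qF_neq0 //.
by congr mx2; ring.
Qed.

Lemma invmx_Sq : invmx Sq = mx2 0 1 (- qF) 0.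
Proof.
apply: invmx_eq; rewrite mul_mx2 mx2_1 mulrNN mulVf ?qF_neq0 //.
by congr mx2; ring.
Qed.

Lemma mulqF2V : qF ^+ 2 * qF^-1 = qF.
Proof. by rewrite expr2 mulfK ?qF_neq0. Qed.

Definition Phi6 : F := qF ^+ 2 - qF + 1.

Definition eigen_row : 'rV[F]_2 := rv2 (qF ^+ 2) 1.

Lemma left_eigen_mod_generator M G :
  [\/ G = Rq, G = invmx Rq, G = Sq | G = invmx Sq] ->
  left_eigen_mod Phi6 eigen_row M -> left_eigen_mod Phi6 eigen_row (M *m G).
Proof.
move=> + eM; case=> ->; rewrite ?invmx_Rq ?invmx_Sq.
all: apply: left_eigen_modM eM _ _; first by apply: laurent_mx2; laurent_tac.
all: apply/left_eigen_mod_rv2P.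
- exists qF, 0, 1.
  by rewrite !mx2E /Phi6; split; laurent_tac; ring.
- exists (- qF ^+ 2), (qF ^+ 2 + qF), 1.
  by rewrite !mx2E /Phi6 mulrN !mulqF2V; split; laurent_tac; ring.
- exists (- qF), (qF + 1), 0.
  by rewrite !mx2E /Phi6 mulrN mulqF2V; split; laurent_tac; ring.
- exists (qF ^+ 2), (- (qF ^+ 2 + qF)), 0.
  by rewrite !mx2E /Phi6; split; laurent_tac; ring.
Qed.

Lemma Gq_left_eigen M : in_Gq M -> left_eigen_mod Phi6 eigen_row M.
Proof.
elim=> {M} [|M _ IH|M _ IH|M _ IH|M _ IH]; first exact: left_eigen_mod1.
all: apply: left_eigen_mod_generator IH.
- exact: Or41.
- exact: Or42.
- exact: Or43.
- exact: Or44.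
Qed.

Theorem corollary5p1 (M : 'M[F]_2) :
  in_Gq M ->
  laurent_dvd (qF ^+ 2 - qF + 1)
    (M 0 1 * qF ^+ 4 + (M 1 1 - M 0 0) * qF ^+ 2 - M 1 0).
Proof.
move=> /Gq_left_eigen /left_eigen_mod_rv2P [c [x [y [_ Lx Ly E0 E1]]]].
exists (qF ^+ 2 * y - x); split; first by laurent_tac.
have -> : M 0 1 * qF ^+ 4 + (M 1 1 - M 0 0) * qF ^+ 2 - M 1 0 =
  qF ^+ 2 * (qF ^+ 2 * M 0 1 + 1 * M 1 1) - (qF ^+ 2 * M 0 0 + 1 * M 1 0) by ring.
by rewrite E0 E1 /Phi6; ring.
Qed.
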